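(* Let $R\in\mathbb{R}^{m\times N}$, $\lambda\ge 0$, and let $\sigma_1$ be the largest singular value of $R$, with corresponding left singular vector $u^1\in\mathbb{R}^m$ and right singular vector $v_1\in\mathbb{R}^{N}$ (unit vectors with $R v_1=\sigma_1 u^1$). Consider the problem $$\min_{d\in\mathbb{R}^m,\ \|d\|_2=1,\ x\in\mathbb{R}^{1\times N}}\ \frac12\|d\,x-R\|_F^2+\lambda\|x\|_2 .$$ If $\sigma_1\ge\lambda$, then $(d,x)=(u^1,(\sigma_1-\lambda)v_1^T)$ is a minimizer. Otherwise (if $\sigma_1<\lambda$), for any $d_0\in\mathbb{R}^m$ with $\|d_0\|_2=1$, the pair $(d_0,0)$ is a minimizer; in particular the optimal row $x$ is zero.
   Context: This is the per-atom update of a K-SVD-type dictionary learning scheme with the row-sparsity ($\ell_{2,1}$) penalty $\lambda\sum_j\|x_j\|_2$, where $R$ is the residual after removing the contribution of the current atom; in the paper $d_0$ is the current (previous) atom. *)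

From mathcomp Require Import all_boot all_order all_algebra.
From mathcomp Require Import reals.
Set Implicit Arguments. Unset Strict Implicit. Unset Printing Implicit Defensive.
Import Order.TTheory GRing.Theory Num.Theory.
Local Open Scope ring_scope.

Definition frob2 (R : realType) (m n : nat) (A : 'M[R]_(m, n)) : R :=
  \sum_i \sum_j A i j ^+ 2.

Definition norm2 (R : realType) (m n : nat) (A : 'M[R]_(m, n)) : R :=
  Num.sqrt (frob2 A).

Definition singular_triple (R : realType) (m n : nat) (A : 'M[R]_(m, n))
  (s : R) (u : 'cV[R]_m) (v : 'cV[R]_n) : Prop :=
  0 <= s /\ norm2 u = 1 /\ norm2 v = 1 /\ A *m v = s *: u /\ A^T *m u = s *: v.

Definition singular_value (R : realType) (m n : nat) (A : 'M[R]_(m, n)) (s : R) : Prop :=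
  exists u v, singular_triple A s u v.

Definition obj (R : realType) (m n : nat) (Rm : 'M[R]_(m, n)) (lam : R)
  (d : 'cV[R]_m) (x : 'rV[R]_n) : R :=
  frob2 (d *m x - Rm) / 2 + lam * norm2 x.

Definition is_minimizer (R : realType) (m n : nat) (Rm : 'M[R]_(m, n)) (lam : R)
  (d : 'cV[R]_m) (x : 'rV[R]_n) : Prop :=
  norm2 d = 1 /\
  forall (d' : 'cV[R]_m) (x' : 'rV[R]_n), norm2 d' = 1 -> obj Rm lam d x <= obj Rm lam d' x'.

From mathcomp Require Import all_boot all_order all_algebra.
From mathcomp Require Import reals classical_sets boolp topology normedtype derive.
From mathcomp Require Import ring lra.
Import Order.TTheory GRing.Theory Num.Theory.
Import numFieldNormedType.Exports.
Local Open Scope ring_scope.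
Set Implicit Arguments. Unset Strict Implicit. Unset Printing Implicit Defensive.

(* Expanding the square, for a unit vector d the objective is
   (|x|^2 - 2 <x, d^T R> + |R|^2) / 2 + lam |x|.  If |d^T R| <= sigma1 for every
   unit d, Cauchy-Schwarz bounds it below by a function of r = |x| alone,
   r^2 / 2 - (sigma1 - lam) r + |R|^2 / 2, which is minimal over r >= 0 at
   r = max (sigma1 - lam, 0), and both candidate pairs attain that bound.
   The bound |d^T R| <= sigma1 is where the maximality of sigma1 enters: by
   compactness some unit row c maximises M = |c R|^2, first-order optimality
   makes c an eigenvector of R R^T for the eigenvalue M, so sqrt M is a
   singular value of R, hence at most sigma1. *)

Lemma quadratic_le0_lin_eq0 (R : realFieldType) (a b : R) :
  (forall t, 2 * t * a + t ^+ 2 * b <= 0) -> a = 0.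
Proof.
(* Test at t = a e, where e = 1 / (|b| + 1) makes the quadratic term too small
   to compensate the linear one. *)
move=> le0; set e := (`|b| + 1)^-1.
have e_gt0 : 0 < e by rewrite invr_gt0 ltr_wpDl.
have e_norm : e * (`|b| + 1) = 1 by rewrite mulVf // gt_eqF // ltr_wpDl.
have eb_gt : - 1 < e * b.
  have := ler_norm (- b); rewrite normrN; nra.
have pos : 0 < e * (2 + e * b) by apply: mulr_gt0 => //; lra.
have : a ^+ 2 * (e * (2 + e * b)) <= 0.
  by have := le0 (a * e); congr (_ <= _); ring.
by rewrite pmulr_lle0 // => a2_le0; apply/eqP; rewrite -sqrf_eq0 eq_le a2_le0 sqr_ge0.
Qed.

Section Frobenius.
Variable R : realType.
Implicit Types p q r : nat.

Definition frobdot p q (A B : 'M[R]_(p, q)) : R := \tr (A *m B^T).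

Lemma frob2_dot p q (A : 'M[R]_(p, q)) : frob2 A = frobdot A A.
Proof.
rewrite /frobdot /mxtrace /frob2; apply: eq_bigr => i _.
by rewrite mxE; apply: eq_bigr => j _; rewrite mxE expr2.
Qed.

Lemma frobdotC p q (A B : 'M[R]_(p, q)) : frobdot A B = frobdot B A.
Proof. by rewrite /frobdot -mxtrace_tr trmx_mul trmxK. Qed.

Lemma frobdotDl p q (A B C : 'M[R]_(p, q)) :
  frobdot (A + B) C = frobdot A C + frobdot B C.
Proof. by rewrite /frobdot mulmxDl mxtraceD. Qed.

Lemma frobdotZl p q k (A B : 'M[R]_(p, q)) : frobdot (k *: A) B = k * frobdot A B.
Proof. by rewrite /frobdot -scalemxAl mxtraceZ. Qed.

Lemma frobdotZr p q k (A B : 'M[R]_(p, q)) : frobdot A (k *: B) = k * frobdot A B.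
Proof. by rewrite frobdotC frobdotZl frobdotC. Qed.

Lemma frobdot0l p q (B : 'M[R]_(p, q)) : frobdot 0 B = 0.
Proof. by rewrite /frobdot mul0mx mxtrace0. Qed.

Lemma frobdot_mulmxl p q r (A : 'M[R]_(p, q)) (B : 'M[R]_(q, r)) C :
  frobdot (A *m B) C = frobdot A (C *m B^T).
Proof. by rewrite /frobdot trmx_mul trmxK mulmxA. Qed.

Lemma frobdot_mulmxr p q r (A : 'M[R]_(p, q)) (B : 'M[R]_(q, r)) C :
  frobdot (A *m B) C = frobdot B (A^T *m C).
Proof. by rewrite /frobdot trmx_mul trmxK -mulmxA mxtrace_mulC mulmxA. Qed.

Lemma frobdot_tr p q (A B : 'M[R]_(p, q)) : frobdot A^T B^T = frobdot A B.
Proof. by rewrite /frobdot trmxK mxtrace_mulC -mxtrace_tr trmx_mul trmxK. Qed.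

Lemma frob2_tr p q (A : 'M[R]_(p, q)) : frob2 A^T = frob2 A.
Proof. by rewrite !frob2_dot frobdot_tr. Qed.

Lemma frob2Z p q k (A : 'M[R]_(p, q)) : frob2 (k *: A) = k ^+ 2 * frob2 A.
Proof. by rewrite !frob2_dot frobdotZl frobdotZr mulrA -expr2. Qed.

Lemma frob2DZ p q (A B : 'M[R]_(p, q)) t :
  frob2 (A + t *: B) = frob2 A + 2 * t * frobdot A B + t ^+ 2 * frob2 B.
Proof.
rewrite !frob2_dot !(frobdotDl, frobdotZl) !(frobdotC _ (_ + _)).
by rewrite !(frobdotDl, frobdotZl) (frobdotC B A); ring.
Qed.

Lemma frob2_ge0 p q (A : 'M[R]_(p, q)) : 0 <= frob2 A.
Proof. by apply: sumr_ge0 => i _; apply: sumr_ge0 => j _; exact: sqr_ge0. Qed.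

Lemma frob2_eq0 p q (A : 'M[R]_(p, q)) : frob2 A = 0 -> A = 0.
Proof.
move=> A0; apply/matrixP => i j; rewrite mxE.
have row_ge0 k : 0 <= \sum_l A k l ^+ 2 by apply: sumr_ge0 => l _; exact: sqr_ge0.
have Ai0 := psumr_eq0P (fun k _ => row_ge0 k) A0 (i := i) isT.
have := psumr_eq0P (fun l _ => sqr_ge0 (A i l)) Ai0 (i := j) isT.
by move/eqP; rewrite sqrf_eq0 => /eqP.
Qed.

Lemma frob20 p q : frob2 (0 : 'M[R]_(p, q)) = 0.
Proof. by rewrite frob2_dot frobdot0l. Qed.

Lemma frob2_mul_col_row p q (d : 'cV[R]_p) (x : 'rV[R]_q) :
  frob2 (d *m x) = frob2 d * frob2 x.
Proof.
rewrite /frob2 big_distrl /=; apply: eq_bigr => i _.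
rewrite !big_ord1 big_distrr /=; apply: eq_bigr => j _.
by rewrite mxE big_ord1 exprMn.
Qed.

Lemma norm2_sqr p q (A : 'M[R]_(p, q)) : norm2 A ^+ 2 = frob2 A.
Proof. by rewrite sqr_sqrtr // frob2_ge0. Qed.

Lemma norm2_ge0 p q (A : 'M[R]_(p, q)) : 0 <= norm2 A.
Proof. exact: sqrtr_ge0. Qed.

Lemma norm20 p q : norm2 (0 : 'M[R]_(p, q)) = 0.
Proof. by rewrite /norm2 frob20 sqrtr0. Qed.

Lemma norm2_eq0 p q (A : 'M[R]_(p, q)) : norm2 A = 0 -> A = 0.
Proof. by move=> A0; apply: frob2_eq0; rewrite -norm2_sqr A0 expr0n. Qed.

Lemma norm2_eq1 p q (A : 'M[R]_(p, q)) : norm2 A = 1 <-> frob2 A = 1.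
Proof. by split=> A1; [rewrite -norm2_sqr A1 expr1n | rewrite /norm2 A1 sqrtr1]. Qed.

Lemma norm2Z p q k (A : 'M[R]_(p, q)) : norm2 (k *: A) = `|k| * norm2 A.
Proof. by rewrite /norm2 frob2Z sqrtrM ?sqr_ge0 // sqrtr_sqr. Qed.

Lemma norm2_tr p q (A : 'M[R]_(p, q)) : norm2 A^T = norm2 A.
Proof. by rewrite /norm2 frob2_tr. Qed.

Lemma frobdot_le_norm2 p q (A B : 'M[R]_(p, q)) : frobdot A B <= norm2 A * norm2 B.
Proof.
set a := norm2 A; set b := norm2 B.
have [a0 b0] : 0 <= a /\ 0 <= b by split; apply: norm2_ge0.
have := frob2_ge0 (b *: A + (- a) *: B).
rewrite frob2DZ frob2Z frobdotZl -!norm2_sqr -/a -/b => h.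
have [ab_gt0|] := ltrP 0 (a * b); first nra.
rewrite le_eqVlt ltNge mulr_ge0 // orbF mulf_eq0 => /orP[] /eqP /norm2_eq0 ->.
  by rewrite frobdot0l mulr_ge0.
by rewrite frobdotC frobdot0l mulr_ge0.
Qed.

End Frobenius.

Section Sphere.
Local Open Scope classical_set_scope.
Variable R : realType.

Lemma continuous_frob2 (T : topologicalType) p q (f : T -> 'M[R]_(p, q)) :
  (forall i j, continuous (fun t => f t i j)) -> continuous (fun t => frob2 (f t)).
Proof.
move=> f_cont; apply: continuous_big => [|i _]; first exact: add_continuous.
apply: continuous_big => [|j _]; first exact: add_continuous.
by under eq_fun do rewrite expr2; move=> t; apply: continuousM; apply: f_cont.
Qed.

Lemma continuous_mulmxr_coord p q r (B : 'M[R]_(q, r)) i j :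
  continuous (fun A : 'M[R]_(p, q) => (A *m B) i j).
Proof.
under eq_fun do rewrite mxE.
apply: continuous_big => [|k _]; first exact: add_continuous.
by move=> A; apply: continuousM; [exact: coord_continuous | exact: cst_continuous].
Qed.

Lemma compact_unit_sphere n : compact [set v : 'rV[R]_n | frob2 v = 1].
Proof.
apply: bounded_closed_compact.
  exists 1; split=> // k k_gt1 v v1.
  rewrite /= /Num.norm /= mx_normrE; apply: bigmax_le => [|[i j] _ /=].
    exact: le_trans (ltW k_gt1).
  have : v i j ^+ 2 <= 1.
    rewrite -v1 /frob2 (bigD1 i) //= (bigD1 j) //= -addrA lerDl.
    by apply: addr_ge0; apply: sumr_ge0 => *; rewrite ?sumr_ge0 // => *; exact: sqr_ge0.
  move: k_gt1; rewrite ler_norml; nra.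
apply: (continuous_closedP _).1 (@closed_eq R 1).
by apply: continuous_frob2 => i j; exact: coord_continuous.
Qed.

Lemma exists_sphere_argmax m n (A : 'M[R]_(m, n)) (d : 'rV[R]_m) :
  frob2 d = 1 -> exists2 c : 'rV[R]_m, frob2 c = 1 &
    forall v : 'rV[R]_m, frob2 v = 1 -> frob2 (v *m A) <= frob2 (c *m A).
Proof.
move=> d1; have [|||c] := @EVT_max_rV R m (fun v => frob2 (v *m A)) [set v | frob2 v = 1].
- by exists d.
- exact: compact_unit_sphere.
- apply: continuous_subspaceT; apply: continuous_frob2 => i j.
  exact: continuous_mulmxr_coord.
- by rewrite inE => c1 c_max; exists c => // v v1; apply: c_max; rewrite inE.
Qed.

End Sphere.

Section OperatorNorm.
Variables (R : realType) (m n : nat) (A : 'M[R]_(m, n)).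

Lemma frob2_mulmx_le_homog (M : R) :
  (forall v : 'rV_m, frob2 v = 1 -> frob2 (v *m A) <= M) ->
  forall v : 'rV_m, frob2 (v *m A) <= M * frob2 v.
Proof.
move=> le_M v; have [v0|v_neq0] := eqVneq v 0.
  by rewrite v0 mul0mx !frob20 mulr0.
have s_gt0 : 0 < norm2 v.
  by rewrite lt_def norm2_ge0 andbT; apply: contra_neq v_neq0; exact: norm2_eq0.
have := le_M ((norm2 v)^-1 *: v).
rewrite -scalemxAl !frob2Z -norm2_sqr exprVn mulVf ?sqrf_eq0 ?gt_eqF // => /(_ erefl).
by rewrite -(ler_pM2l (exprn_gt0 2 s_gt0)) mulrA mulfV ?sqrf_eq0 ?gt_eqF // mul1r mulrC.
Qed.

Lemma rayleigh_argmax_eigen (M : R) (c : 'rV_m) :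
  (forall v : 'rV_m, frob2 (v *m A) <= M * frob2 v) ->
  frob2 (c *m A) = M * frob2 c -> c *m A *m A^T = M *: c.
Proof.
move=> le_M c_max.
(* c maximises the Rayleigh quotient, so for every e the quadratic
   t |-> |(c + t e) A|^2 - M |c + t e|^2 <= 0 vanishes at t = 0. *)
have crit e : frobdot (c *m A) (e *m A) = M * frobdot c e.
  apply/eqP; rewrite -subr_eq0; apply/eqP.
  apply: (@quadratic_le0_lin_eq0 _ _ (frob2 (e *m A) - M * frob2 e)) => t.
  by have := le_M (c + t *: e); rewrite mulmxDl -scalemxAl !frob2DZ c_max; lra.
set E := c *m A *m A^T - M *: c.
have E_orth : frobdot E E = 0.
  rewrite {2}/E -scaleNr frobdotC !(frobdotDl, frobdotZl) frobdotC -frobdot_mulmxl.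
  by rewrite frobdotC crit; ring.
by apply/eqP; rewrite -subr_eq0 -/E; apply/eqP/frob2_eq0; rewrite frob2_dot.
Qed.

Lemma singular_triple_of_eigen (M : R) (c : 'rV_m) :
  0 < M -> frob2 c = 1 -> c *m A *m A^T = M *: c ->
  singular_triple A (Num.sqrt M) c^T ((Num.sqrt M)^-1 *: (c *m A)^T).
Proof.
move=> M_gt0 c1 eigen; set s := Num.sqrt M.
have s_gt0 : 0 < s by rewrite sqrtr_gt0.
have sM : s ^+ 2 = M by rewrite sqr_sqrtr // ltW.
have cA2 : frob2 (c *m A) = M.
  by rewrite frob2_dot frobdot_mulmxl frobdotC eigen frobdotZl -frob2_dot c1 mulr1.
split; first exact: ltW.
split; first by rewrite norm2_eq1 frob2_tr.
split.
  by rewrite norm2_eq1 frob2Z frob2_tr cA2 -sM exprVn mulVf // sqrf_eq0 gt_eqF.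
split; last by rewrite scalerA mulfV ?gt_eqF // scale1r trmx_mul.
rewrite -scalemxAr.
have -> : A *m (c *m A)^T = M *: c^T.
  by rewrite -[A in A *m _]trmxK -trmx_mul eigen linearZ.
by rewrite scalerA -sM expr2 mulrA mulVf ?gt_eqF // mul1r.
Qed.

Lemma norm2_mulmx_le_singular (s : R) :
  0 <= s -> (forall s', singular_value A s' -> s' <= s) ->
  forall v : 'rV_m, frob2 v = 1 -> norm2 (v *m A) <= s.
Proof.
move=> s_ge0 s_max v v1.
have [c c1 c_max] := exists_sphere_argmax A v1.
set M := frob2 (c *m A) in c_max.
have homog := frob2_mulmx_le_homog c_max.
have vA_le : norm2 (v *m A) <= Num.sqrt M.
  by rewrite ler_sqrt ?frob2_ge0 // -[leRHS]mulr1 -v1; exact: homog.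
apply: le_trans vA_le _; have [M0|M_neq0] := eqVneq M 0.
  by rewrite M0 sqrtr0.
have M_gt0 : 0 < M by rewrite lt_def M_neq0 frob2_ge0.
apply: s_max; exists c^T, ((Num.sqrt M)^-1 *: (c *m A)^T).
apply: singular_triple_of_eigen => //.
by apply: rayleigh_argmax_eigen homog _; rewrite c1 mulr1.
Qed.

End OperatorNorm.

Section Objective.
Variables (R : realType) (m n : nat) (Rm : 'M[R]_(m, n)) (lam : R).

(* obj with the cross term <x, d^T Rm> replaced by its upper bound s |x|. *)
Definition radial_obj (s r : R) : R := (r ^+ 2 - 2 * s * r + frob2 Rm) / 2 + lam * r.

Lemma obj_unit (d : 'cV_m) (x : 'rV_n) : norm2 d = 1 ->
  obj Rm lam d x = (frob2 x - 2 * frobdot x (d^T *m Rm) + frob2 Rm) / 2 + lam * norm2 x.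
Proof.
move=> /norm2_eq1 d1; rewrite /obj -scaleN1r frob2DZ frob2_mul_col_row d1 mul1r.
by rewrite frobdot_mulmxr; congr (_ / 2 + _); ring.
Qed.

Lemma radial_obj_le_obj (s : R) :
  (forall v : 'rV_m, frob2 v = 1 -> norm2 (v *m Rm) <= s) ->
  forall (d : 'cV_m) (x : 'rV_n), norm2 d = 1 -> radial_obj s (norm2 x) <= obj Rm lam d x.
Proof.
move=> op_le d x d1; rewrite obj_unit // /radial_obj -(norm2_sqr x).
have dR_le : norm2 (d^T *m Rm) <= s by apply: op_le; rewrite frob2_tr -norm2_eq1.
have := frobdot_le_norm2 x (d^T *m Rm); have := ler_wpM2l (norm2_ge0 x) dR_le.
lra.
Qed.

End Objective.

Theorem proposition2 (R : realType) (m N : nat) (Rm : 'M[R]_(m, N)) (lam : R)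
  (sigma1 : R) (u1 : 'cV[R]_m) (v1 : 'cV[R]_N) :
  0 <= lam ->
  singular_triple Rm sigma1 u1 v1 ->
  (forall s, singular_value Rm s -> s <= sigma1) ->
  (lam <= sigma1 -> is_minimizer Rm lam u1 ((sigma1 - lam) *: v1^T)) /\
  (sigma1 < lam -> forall d0 : 'cV[R]_m, norm2 d0 = 1 -> is_minimizer Rm lam d0 0).
Proof.
move=> _ [s_ge0 [u1_1 [v1_1 [_ RTu1]]]] s_max.
have lower := radial_obj_le_obj lam (norm2_mulmx_le_singular s_ge0 s_max).
split=> [lam_le | lam_gt d0 d0_1]; split=> // d x /(lower d x); apply: le_trans.
- have nx : norm2 ((sigma1 - lam) *: v1^T) = sigma1 - lam.
    by rewrite norm2Z norm2_tr v1_1 mulr1 ger0_norm // subr_ge0.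
  have dotx : frobdot ((sigma1 - lam) *: v1^T) (u1^T *m Rm) = (sigma1 - lam) * sigma1.
    rewrite frobdotZl -frobdot_tr !trmxK trmx_mul trmxK RTu1 frobdotZr -frob2_dot.
    by move/norm2_eq1: v1_1 => ->; rewrite mulr1.
  rewrite obj_unit // dotx -norm2_sqr nx /radial_obj.
  by have := sqr_ge0 (norm2 x - (sigma1 - lam)); lra.
- rewrite obj_unit // frob20 frobdot0l norm20 /radial_obj.
  by have := norm2_ge0 x; nra.
Qed.
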